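(* Let $n>p$ be positive integers, $N$ a real $n\times p$ matrix with $N_{ij}=0$ for $i<j$ and $N_{ii}>0$ for $i=1,\dots,p$, and $X$ a real $n\times p$ matrix with $X_{ij}=0$ for $i<j$. If $NX^{T}$ is skew-symmetric, then $X=0$. *)

From mathcomp Require Import all_boot all_order all_algebra.
From mathcomp Require Import reals.

(* Induction on the columns of X.  If its first k columns vanish, triangularity
   of N and X leaves a single term in the row and in the column of index k of
   N X^T: (N X^T)_kj = N_kk X_jk and (N X^T)_jk = N_jk X_kk.  The diagonal
   entry N_kk X_kk of a skew matrix is zero (in characteristic 0), so X_kk = 0
   as N_kk <> 0; then skew-symmetry forces N_kk X_jk = 0, i.e. column k of X
   vanishes too. *)
From mathcomp Require Import all_boot all_order all_algebra.
From mathcomp Require Import reals.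

Set Implicit Arguments.
Unset Strict Implicit.
Unset Printing Implicit Defensive.

Import Order.TTheory GRing.Theory Num.Theory.
Local Open Scope ring_scope.

Lemma skew_mxE (R : zmodType) (n : nat) (A : 'M[R]_n) :
  A^T = - A -> forall i j, A j i = - A i j.
Proof. by move/matrixP=> skewA i j; have := skewA i j; rewrite !mxE. Qed.

Lemma mulmx_tr_entry1 (R : pzSemiRingType) (m m' p : nat)
    (A : 'M[R]_(m, p)) (B : 'M[R]_(m', p)) (i : 'I_m) (j : 'I_m') (k : 'I_p) :
  (forall l, l != k -> A i l * B j l = 0) -> (A *m B^T) i j = A i k * B j k.
Proof.
move=> off_k; rewrite mxE (bigD1 k) //= big1 ?addr0 ?mxE // => l /off_k.
by rewrite mxE.
Qed.

Section LowerTriangularSkew.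

Variables (R : numDomainType) (n p : nat) (N X : 'M[R]_(n, p)).
Hypotheses (le_pn : (p <= n)%N) (trigN : is_trig_mx N) (trigX : is_trig_mx X).
Hypothesis N_diag_neq0 : forall k : 'I_p, N (widen_ord le_pn k) k != 0.
Hypothesis skewNXt : (N *m X^T)^T = - (N *m X^T).

Lemma trig_skew_col_eq0 (k : 'I_p) :
  (forall j (l : 'I_p), (l < k)%N -> X j l = 0) -> forall j, X j k = 0.
Proof.
move=> Xlt0 j; set k' := widen_ord le_pn k.
have row_k i : (N *m X^T) k' i = N k' k * X i k.
  apply: mulmx_tr_entry1 => l; rewrite neq_ltn => /orP[lk | kl].
    by rewrite Xlt0 ?mulr0.
  by rewrite (elimT is_trig_mxP trigN) ?mul0r.
have col_k i : (N *m X^T) i k' = N i k * X k' k.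
  apply: mulmx_tr_entry1 => l; rewrite neq_ltn => /orP[lk | kl].
    by rewrite Xlt0 ?mulr0.
  by rewrite (elimT is_trig_mxP trigX) ?mulr0.
have Xkk0 : X k' k = 0.
  have := skew_mxE skewNXt k' k'; rewrite row_k => /esym/eqP.
  by rewrite eqNr mulf_eq0 (negPf (N_diag_neq0 k)) => /eqP.
have := skew_mxE skewNXt j k'; rewrite row_k col_k Xkk0 mulr0 oppr0 => /eqP.
by rewrite mulf_eq0 (negPf (N_diag_neq0 k)) => /eqP.
Qed.

Lemma trig_skew_mx_eq0 : X = 0.
Proof.
suff col0 m j (k : 'I_p) : (k < m)%N -> X j k = 0.
  by apply/matrixP => j k; rewrite mxE (col0 p).
elim: m j k => [//|m IHm] j k.
rewrite ltnS leq_eqVlt => /predU1P[km|]; last exact: IHm.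
by apply: trig_skew_col_eq0 => j' l; rewrite km; apply: IHm.
Qed.

End LowerTriangularSkew.

Theorem mainTheorem2 (R : realType) (n p : nat) (Hp : (0 < p)%N) (Hnp : (p < n)%N)
  (N X : 'M[R]_(n, p))
  (HNlow : forall (i : 'I_n) (j : 'I_p), (i < j)%N -> N i j = 0)
  (HNdiag : forall (i : 'I_n) (j : 'I_p), (i : nat) = j -> 0 < N i j)
  (HXlow : forall (i : 'I_n) (j : 'I_p), (i < j)%N -> X i j = 0)
  (Hskew : (N *m X^T)^T = - (N *m X^T)) :
  X = 0.
Proof.
apply: (trig_skew_mx_eq0 (le_pn := ltnW Hnp)) Hskew.
- exact/is_trig_mxP.
- exact/is_trig_mxP.
- by move=> k; rewrite lt0r_neq0 ?HNdiag.
Qed.
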